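(* Let $(\mathcal G,\lambda)$ be a small morphism-colored groupoid satisfying the inverse-compatibility condition, and let $\varpi(\mathcal G,\lambda)=(\bar\lambda,s_1)$ be the morphism-colored functor from $(\mathcal G,\lambda)$ to the discrete morphism-colored category $(\mathcal U(\mathcal G,\lambda),\mathrm{id})$. Then for every category $\mathcal C$ and every morphism-colored functor $(F,\gamma)$ from $(\mathcal G,\lambda)$ to the discrete morphism-colored category $(\mathcal C,\mathrm{id})$, there exists a unique morphism-colored functor $(\check F,\check\gamma)$ from $(\mathcal U(\mathcal G,\lambda),\mathrm{id})$ to $(\mathcal C,\mathrm{id})$ such that $(\check F,\check\gamma)\circ\varpi(\mathcal G,\lambda)=(F,\gamma)$, i.e. $\check F\circ\bar\lambda=F$ and $\check\gamma\circ s_1=\gamma$.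
   Context: A morphism-colored category is a pair $(\mathcal C,\lambda)$ where $\mathcal C$ is a category and $\lambda$ assigns to each morphism $f$ of $\mathcal C$ a ''color'' $\lambda(f)$, such that: whenever $g,f_1,f_2\in\mathrm{Mor}(\mathcal C)$ with $(f_1,f_2)$ composable satisfy $\lambda(g)=\lambda(f_1\circ f_2)$, there exist composable $g_1,g_2$ with $g=g_1\circ g_2$, $\lambda(g_1)=\lambda(f_1)$, $\lambda(g_2)=\lambda(f_2)$. It is a morphism-colored groupoid if $\mathcal C$ is a groupoid, and small if $\mathcal C$ is small and $\lambda$ is a map into a set. For any category $\mathcal C$, $(\mathcal C,\mathrm{id})$ (each morphism colored by itself) is the discrete morphism-colored category. A morphism-colored functor $(F,\gamma):(\mathcal C,\lambda)\to(\mathcal C',\lambda')$ is a functor $F:\mathcal C\to\mathcal C'$ together with a map $\gamma$ on colors such that $\gamma(\lambda(f))=\lambda'(F(f))$ for every morphism $f$ of $\mathcal C$; composition is $(F',\gamma')\circ(F,\gamma)=(F'\circ F,\gamma'\circ\gamma)$. Standing setup: $(\mathcal G,\lambda)$ small morphism-colored groupoid, $\lambda:\mathrm{Mor}(\mathcal G)\to I$, with inverse-compatibility: $\lambda(f)=\lambda(g)\Rightarrow\lambda(f^{-1})=\lambda(g^{-1})$. $I_1=\lambda(\mathrm{Mor}(\mathcal G))$, $\lambda_1:\mathrm{Mor}(\mathcal G)\to I_1$ the corestriction of $\lambda$; $I_0=\{\lambda(\mathrm{id}_x)\}$, $\lambda_0(x)=\lambda(\mathrm{id}_x)$. The equivalence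 relation $\overset{1}{\sim}$ on $I_1$ is generated by the declaration $\lambda(f_1\circ\cdots\circ f_l)\overset{1}{\sim}\lambda(g_1\circ\cdots\circ g_l)$ for composable sequences with $\lambda(f_i)=\lambda(g_i)$ for all $i$ (this declaration is already an equivalence relation); $s_1:I_1\to\bar I_1$ is the quotient. The equivalence relation $\overset{0}{\sim}$ on $I_0$ is given by $\lambda_0(\mathrm{source}(f))\overset{0}{\sim}\lambda_0(\mathrm{source}(g))$ whenever $(s_1\circ\lambda_1)(f)=(s_1\circ\lambda_1)(g)$; $s_0:I_0\to\bar I_0$ is the quotient. $\mathcal U(\mathcal G,\lambda)$ is the groupoid with objects $\bar I_0$, morphisms $\bar I_1$, source/target of $(s_1\circ\lambda_1)(f)$ equal to $(s_0\circ\lambda_0)$ of source/target of $f$, and composition $(s_1\lambda_1)(f)\circ(s_1\lambda_1)(g)=(s_1\lambda_1)(f\circ g)$. The functor $\bar\lambda:\mathcal G\to\mathcal U(\mathcal G,\lambda)$ is $\bar\lambda(x)=(s_0\circ\lambda_0)(x)$, $\bar\lambda(f)=(s_1\circ\lambda_1)(f)$, and $\varpi(\mathcal G,\lambda):=(\bar\lambda,s_1)$. *)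

From Stdlib Require Import Relations List.

(** A small category: one type of objects, one type of all morphisms,
    source/target, identities, and a total composition operation
    [comp f g] (= f ∘ g, "first g then f") that is meaningful when
    [src f = tgt g]. *)
Record Cat := {
  Ob : Type;
  Mor : Type;
  src : Mor -> Ob;
  tgt : Mor -> Ob;
  idm : Ob -> Mor;
  comp : Mor -> Mor -> Mor;
  src_idm : forall x, src (idm x) = x;
  tgt_idm : forall x, tgt (idm x) = x;
  src_comp : forall f g, src f = tgt g -> src (comp f g) = src g;
  tgt_comp : forall f g, src f = tgt g -> tgt (comp f g) = tgt f;
  comp_idl : forall f, comp (idm (tgt f)) f = f;
  comp_idr : forall f, comp f (idm (src f)) = f;
  comp_assoc : forall f g h, src f = tgt g -> src g = tgt h ->
     comp f (comp g h) = comp (comp f g) h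
}.

Arguments src {c} _.
Arguments tgt {c} _.
Arguments idm {c} _.
Arguments comp {c} _ _.

Definition is_inverse (C : Cat) (f g : Mor C) : Prop :=
  src g = tgt f /\ tgt g = src f /\
  comp g f = idm (src f) /\ comp f g = idm (tgt f).

Definition is_groupoid (C : Cat) : Prop :=
  forall f : Mor C, exists g, is_inverse C f g.

Definition mc_cond (C : Cat) {I : Type} (lam : Mor C -> I) : Prop :=
  forall g f1 f2 : Mor C, src f1 = tgt f2 -> lam g = lam (comp f1 f2) ->
  exists g1 g2 : Mor C, src g1 = tgt g2 /\ g = comp g1 g2 /\
     lam g1 = lam f1 /\ lam g2 = lam f2.

Definition inv_compat (C : Cat) {I : Type} (lam : Mor C -> I) : Prop :=
  forall f g f' g' : Mor C, is_inverse C f f' -> is_inverse C g g' ->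
  lam f = lam g -> lam f' = lam g'.

Definition is_functor (C D : Cat) (Fo : Ob C -> Ob D) (Fm : Mor C -> Mor D)
  : Prop :=
  (forall f, src (Fm f) = Fo (src f)) /\
  (forall f, tgt (Fm f) = Fo (tgt f)) /\
  (forall x, Fm (idm x) = idm (Fo x)) /\
  (forall f g, src f = tgt g -> Fm (comp f g) = comp (Fm f) (Fm g)).

Definition quot (A : Type) (R : relation A) : Type :=
  { P : A -> Prop | exists a, P = clos_refl_sym_trans A R a }.

Definition qproj {A : Type} (R : relation A) (a : A) : quot A R :=
  exist _ (clos_refl_sym_trans A R a) (ex_intro _ a eq_refl).

Section U.
Variables (G : Cat) (I : Type) (lam : Mor G -> I).

Definition I1 : Type := { i : I | exists f : Mor G, lam f = i }.
Definition lam1 (f : Mor G) : I1 := exist _ (lam f) (ex_intro _ f eq_refl).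

Definition I0 : Type := { i : I | exists x : Ob G, lam (idm x) = i }.
Definition lam0 (x : Ob G) : I0 :=
  exist _ (lam (idm x)) (ex_intro _ x eq_refl).

(** Composable sequences f1, f2, ..., fl (l >= 1), written [f :: fs],
    and their composite f1 ∘ f2 ∘ ... ∘ fl. *)
Fixpoint composable (f : Mor G) (fs : list (Mor G)) : Prop :=
  match fs with
  | nil => True
  | g :: gs => src f = tgt g /\ composable g gs
  end.

Fixpoint compose_seq (f : Mor G) (fs : list (Mor G)) : Mor G :=
  match fs with
  | nil => f
  | g :: gs => comp f (compose_seq g gs)
  end.

Definition decl1 (i j : I1) : Prop :=
  exists (f g : Mor G) (fs gs : list (Mor G)),
    composable f fs /\ composable g gs /\
    lam f = lam g /\ Forall2 (fun a b => lam a = lam b) fs gs /\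
    proj1_sig i = lam (compose_seq f fs) /\
    proj1_sig j = lam (compose_seq g gs).

Definition Ibar1 : Type := quot I1 decl1.
Definition s1 : I1 -> Ibar1 := qproj decl1.

Definition decl0 (i j : I0) : Prop :=
  exists f g : Mor G, s1 (lam1 f) = s1 (lam1 g) /\
    i = lam0 (src f) /\ j = lam0 (src g).

Definition Ibar0 : Type := quot I0 decl0.
Definition s0 : I0 -> Ibar0 := qproj decl0.

Definition lambar0 (x : Ob G) : Ibar0 := s0 (lam0 x).
Definition lambar1 (f : Mor G) : Ibar1 := s1 (lam1 f).

(** A functor U(G,lam) -> C, given by (Fo, Fm), where the structure of
    the groupoid U(G,lam) is the one of the paper: objects Ibar0,
    morphisms Ibar1, source/target of lambar1 f are lambar0 (src f),
    lambar0 (tgt f), identity at lambar0 x is lambar1 (id_x) and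
    lambar1 f ∘ lambar1 g = lambar1 (f ∘ g) for composable f, g. *)
Definition is_functor_from_U (C : Cat) (Fo : Ibar0 -> Ob C)
  (Fm : Ibar1 -> Mor C) : Prop :=
  (forall f, src (Fm (lambar1 f)) = Fo (lambar0 (src f))) /\
  (forall f, tgt (Fm (lambar1 f)) = Fo (lambar0 (tgt f))) /\
  (forall x, Fm (lambar1 (idm x)) = idm (Fo (lambar0 x))) /\
  (forall f g, src f = tgt g ->
     Fm (lambar1 (comp f g)) = comp (Fm (lambar1 f)) (Fm (lambar1 g))).

End U.

Arguments I1 {G I} lam.
Arguments lam1 {G I} lam f.
Arguments Ibar0 {G I} lam.
Arguments Ibar1 {G I} lam.
Arguments s1 {G I} lam _.
Arguments lambar0 {G I} lam x.
Arguments lambar1 {G I} lam f.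
Arguments is_functor_from_U {G I} lam C Fo Fm.

(** Morphism-colored functor (F, gam) : (G, lam) -> (C, id).
    The colors of (G, lam) are I_1 (the image of lam). *)
Definition mc_functor_to_discrete (G : Cat) {I : Type} (lam : Mor G -> I)
  (C : Cat) (Fo : Ob G -> Ob C) (Fm : Mor G -> Mor C) (gam : I1 lam -> Mor C)
  : Prop :=
  is_functor G C Fo Fm /\ (forall f, gam (lam1 lam f) = Fm f).

Definition mc_functor_U_to_discrete (G : Cat) {I : Type} (lam : Mor G -> I)
  (C : Cat) (Fo : Ibar0 lam -> Ob C) (Fm : Ibar1 lam -> Mor C)
  (gam : Ibar1 lam -> Mor C) : Prop :=
  is_functor_from_U lam C Fo Fm /\ (forall a, gam a = Fm a).

From Stdlib Require Import Relations List.
From Stdlib Require Import ClassicalEpsilon ProofIrrelevance FunctionalExtensionality.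

(* A functor F sends a composite to the composite of the images, and the image
   of a morphism depends only on its color; hence gam is constant on the
   generating relation of ~1 and descends to Ibar1.  On objects, F x is the
   source of gam(lam id_x), which is constant on the generating relation of ~0
   because ~0 identifies the sources of ~1-equivalent morphisms.  Uniqueness
   holds because lambar is surjective on objects and on morphisms. *)

Lemma sig_ext {A : Type} {P : A -> Prop} (u v : sig P) :
  proj1_sig u = proj1_sig v -> u = v.
Proof. apply eq_sig_hprop; intros; apply proof_irrelevance. Qed.

Section Quotient.
Variables (A : Type) (R : relation A).

Definition qlift {B : Type} (h : A -> B) (q : quot A R) : B :=
  h (proj1_sig (constructive_indefinite_description _ (proj2_sig q))).

Lemma rst_respects {B : Type} (h : A -> B) :
  (forall a b, R a b -> h a = h b) ->
  forall a b, clos_refl_sym_trans A R a b -> h a = h b.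
Proof. intros hR a b Hab; induction Hab; congruence || auto. Qed.

Lemma qlift_qproj {B : Type} (h : A -> B) :
  (forall a b, R a b -> h a = h b) -> forall a, qlift h (qproj R a) = h a.
Proof.
  intros hR a; unfold qlift.
  destruct (constructive_indefinite_description _ _) as [a' Ea']; simpl in *.
  symmetry; apply (rst_respects h hR).
  rewrite Ea'; apply rst_refl.
Qed.

Lemma qproj_surj (q : quot A R) : exists a, q = qproj R a.
Proof. destruct q as [P [a ->]]; exists a; now apply sig_ext. Qed.

End Quotient.

Arguments qlift {A} R {B} h q.

Lemma eq_of_surj_comp {A B D : Type} (p : A -> B) (h k : B -> D) :
  (forall b, exists a, b = p a) ->
  (fun a => h (p a)) = (fun a => k (p a)) -> h = k.
Proof.
  intros Hp Ehk; apply functional_extensionality; intros b.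
  destruct (Hp b) as [a ->]; exact (f_equal (fun m => m a) Ehk).
Qed.

Section Universal.
Context {G : Cat} {I : Type} (lam : Mor G -> I).

Lemma tgt_compose_seq f fs :
  composable G f fs -> tgt (compose_seq G f fs) = tgt f.
Proof.
  revert f; induction fs as [|g gs IH]; intros f Hc; simpl in *; auto.
  destruct Hc as [Hfg Hc]; rewrite tgt_comp; auto; rewrite IH; auto.
Qed.

Lemma lambar1_surj (q : Ibar1 lam) : exists f, q = lambar1 lam f.
Proof.
  destruct (qproj_surj _ _ q) as [[i [f Ef]] ->].
  exists f; unfold lambar1, s1; f_equal; now apply sig_ext.
Qed.

Lemma lambar0_surj (q : Ibar0 lam) : exists x, q = lambar0 lam x.
Proof.
  destruct (qproj_surj _ _ q) as [[i [x Ex]] ->].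
  exists x; unfold lambar0, s0; f_equal; now apply sig_ext.
Qed.

Definition I1_of_I0 (j : I0 G I lam) : I1 lam :=
  exist _ (proj1_sig j)
    match proj2_sig j with ex_intro _ x Ex => ex_intro _ (idm x) Ex end.

Lemma I1_of_I0_lam0 x : I1_of_I0 (lam0 G I lam x) = lam1 lam (idm x).
Proof. now apply sig_ext. Qed.

Section Descent.
Context {C : Cat} {Fo : Ob G -> Ob C} {Fm : Mor G -> Mor C}
  (gam : I1 lam -> Mor C).
Hypothesis HF : is_functor G C Fo Fm.
Hypothesis Hgam : forall f, gam (lam1 lam f) = Fm f.

Lemma functor_compose_seq f fs : composable G f fs ->
  Fm (compose_seq G f fs) = compose_seq C (Fm f) (map Fm fs).
Proof.
  destruct HF as [_ [_ [_ Fcomp]]].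
  revert f; induction fs as [|g gs IH]; intros f Hc; simpl in *; auto.
  destruct Hc as [Hfg Hc].
  rewrite Fcomp by (rewrite tgt_compose_seq; auto); rewrite IH; auto.
Qed.

Lemma gam_proj1 i f : proj1_sig i = lam f -> gam i = Fm f.
Proof. intros Ei; rewrite <- Hgam; f_equal; now apply sig_ext. Qed.

Lemma Fm_of_same_color f g : lam f = lam g -> Fm f = Fm g.
Proof. intros E; rewrite <- Hgam; apply gam_proj1, E. Qed.

Lemma gam_decl1 i j : decl1 G I lam i j -> gam i = gam j.
Proof.
  intros (f & g & fs & gs & Cf & Cg & Efg & Efsgs & Ei & Ej).
  rewrite (gam_proj1 _ _ Ei), (gam_proj1 _ _ Ej).
  rewrite !functor_compose_seq by assumption.
  rewrite (Fm_of_same_color _ _ Efg); f_equal.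
  clear Cf Cg Ei Ej; induction Efsgs; simpl; f_equal; auto using Fm_of_same_color.
Qed.

Definition Fm_bar : Ibar1 lam -> Mor C := qlift (decl1 G I lam) gam.

Lemma Fm_bar_s1 i : Fm_bar (s1 lam i) = gam i.
Proof. apply qlift_qproj, gam_decl1. Qed.

Lemma Fm_bar_lambar1 f : Fm_bar (lambar1 lam f) = Fm f.
Proof. unfold lambar1; rewrite Fm_bar_s1; apply Hgam. Qed.

Definition object_image (j : I0 G I lam) : Ob C := src (gam (I1_of_I0 j)).

Lemma object_image_lam0 x : object_image (lam0 G I lam x) = Fo x.
Proof.
  destruct HF as [_ [_ [Fid _]]].
  unfold object_image; rewrite I1_of_I0_lam0, Hgam, Fid; apply src_idm.
Qed.

Lemma object_image_decl0 i j : decl0 G I lam i j -> object_image i = object_image j.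
Proof.
  destruct HF as [Fsrc _].
  intros (f & g & Efg & -> & ->); rewrite !object_image_lam0, <- !Fsrc.
  rewrite <- !Fm_bar_lambar1; unfold lambar1; now rewrite Efg.
Qed.

Definition Fo_bar : Ibar0 lam -> Ob C := qlift (decl0 G I lam) object_image.

Lemma Fo_bar_lambar0 x : Fo_bar (lambar0 lam x) = Fo x.
Proof.
  unfold Fo_bar, lambar0, s0; rewrite qlift_qproj.
  - apply object_image_lam0.
  - apply object_image_decl0.
Qed.

Lemma functor_from_U_bar : is_functor_from_U lam C Fo_bar Fm_bar.
Proof.
  destruct HF as (Fsrc & Ftgt & Fid & Fcomp).
  repeat split; intros; rewrite ?Fm_bar_lambar1, ?Fo_bar_lambar0; auto.
Qed.

End Descent.
End Universal.

(* The groupoid, coloring and inverse-compatibility hypotheses are what make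
   U(G, lam) a groupoid; the universal property, with functors out of U
   described by [is_functor_from_U], holds without them. *)
Theorem mainTheorem2 (G : Cat) (I : Type) (lam : Mor G -> I)
  (Hgpd : is_groupoid G) (Hmc : mc_cond G lam) (Hinv : inv_compat G lam) :
  forall (C : Cat) (Fo : Ob G -> Ob C) (Fm : Mor G -> Mor C)
         (gam : I1 lam -> Mor C),
  mc_functor_to_discrete G lam C Fo Fm gam ->
  exists (Fo' : Ibar0 lam -> Ob C) (Fm' : Ibar1 lam -> Mor C)
         (gam' : Ibar1 lam -> Mor C),
    (mc_functor_U_to_discrete G lam C Fo' Fm' gam' /\
     (fun x => Fo' (lambar0 lam x)) = Fo /\
     (fun f => Fm' (lambar1 lam f)) = Fm /\
     (fun i => gam' (s1 lam i)) = gam) /\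
    (forall (Fo'' : Ibar0 lam -> Ob C) (Fm'' : Ibar1 lam -> Mor C)
            (gam'' : Ibar1 lam -> Mor C),
       mc_functor_U_to_discrete G lam C Fo'' Fm'' gam'' ->
       (fun x => Fo'' (lambar0 lam x)) = Fo ->
       (fun f => Fm'' (lambar1 lam f)) = Fm ->
       (fun i => gam'' (s1 lam i)) = gam ->
       Fo'' = Fo' /\ Fm'' = Fm' /\ gam'' = gam').
Proof.
  intros C Fo Fm gam [HF Hgam].
  exists (Fo_bar lam gam), (Fm_bar lam gam), (Fm_bar lam gam); split.
  - split; [split; [exact (functor_from_U_bar lam gam HF Hgam) | reflexivity] |].
    repeat split; apply functional_extensionality.
    + exact (Fo_bar_lambar0 lam gam HF Hgam).
    + exact (Fm_bar_lambar1 lam gam HF Hgam).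
    + exact (Fm_bar_s1 lam gam HF Hgam).
  - intros Fo'' Fm'' gam'' [_ Egam''] EFo EFm _.
    assert (EFm' : Fm'' = Fm_bar lam gam).
    { apply (eq_of_surj_comp (lambar1 lam)); [apply lambar1_surj |].
      rewrite EFm; apply functional_extensionality; intros f.
      symmetry; apply (Fm_bar_lambar1 lam gam HF Hgam). }
    split; [| split; [exact EFm' |]].
    + apply (eq_of_surj_comp (lambar0 lam)); [apply lambar0_surj |].
      rewrite EFo; apply functional_extensionality; intros x.
      symmetry; apply (Fo_bar_lambar0 lam gam HF Hgam).
    + apply functional_extensionality; intros q; now rewrite Egam'', EFm'.
Qed.
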